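(* Let $A_{i,j}(z)=|z|^\gamma(|z|^2\delta_{i,j}-z_iz_j)$ on $\mathbb{R}^d$ with $-d-1\le\gamma\le 1$, and let $s_t:\mathbb{R}^d\to\mathbb{R}^d$ be any sufficiently regular time-dependent vector field. Consider the continuity equation $$\frac{\partial u_t}{\partial t}+\nabla\cdot(v_tu_t)=0,\qquad v_t(x)=-\int_{\mathbb{R}^d}A(x-y)\big[s_t(x)-s_t(y)\big]\,\mathrm{d}u_t(y),$$ with initial density $u_0$. 1. The density solution $u_t$ conserves mass, momentum and energy: $\int u_t=\int u_0$, $\int xu_t=\int xu_0$, $\int|x|^2u_t=\int|x|^2u_0$; moreover the estimated entropy $\mathcal{E}_t:=\int_0^t\int_{\mathbb{R}^d}s_\tau(x)\cdot v_\tau(x)u_\tau(x)\,\mathrm{d}x\,\mathrm{d}\tau$ satisfies $\frac{\mathrm{d}}{\mathrm{d}t}\mathcal{E}_t\le 0$. 2. The particle solution $\frac1n\sum_{i=1}^n\delta_{X_i(t)}$ with $\frac{\mathrm{d}X_i}{\mathrm{d}t}=v_t(X_i)$, where $v_t(X_i)=-\frac1n\sum_{j=1}^nA(X_i-X_j)[s_t(X_i)-s_t(X_j)]$, conserves mass, momentum and energy: $\frac1n\sum_iX_i(t)=\frac1n\sum_iX_i(0)$ and $\frac1n\sum_i|X_i(t)|^2=\frac1n\sum_i|X_i(0)|^2$; moreover $\mathcal{E}_t:=\frac1n\int_0^t\sum_{i=1}^n s_\tau(X_i)\cdot v_\tau(X_i)\,\mathrm{d}\tau$ satisfies $\frac{\mathrm{d}}{\mathrm{d}t}\mathcal{E}_t\le0$.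 3. The forward-Euler time-discretized particle solution $X_i^{k+1}=X_i^k+\Delta t\, v(X_i^k)$, where $v(X_i^k)=-\frac1n\sum_{j=1}^nA(X_i^k-X_j^k)[s(X_i^k)-s(X_j^k)]$ and $\{X_i^k\}_{i=1}^n$ are the particle locations at time $t_k=k\Delta t$, conserves mass and momentum, $\frac1n\sum_iX_i^{k+1}=\frac1n\sum_iX_i^k$, and the estimated entropy $\mathcal{E}^k:=\frac{\Delta t}{n}\sum_{j=1}^k\sum_{i=1}^n s(X_i^j)\cdot v(X_i^j)$ satisfies $\mathcal{E}^{k+1}\le\mathcal{E}^k$.
   Context: Solutions of the continuity equation are understood in the weak sense: $u_t$ is a curve of probability measures with $\frac{\mathrm{d}}{\mathrm{d}t}\int\phi\,\mathrm{d}u_t=\int\nabla\phi\cdot v_t\,\mathrm{d}u_t$ for all test functions $\phi$. *)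

From HB Require Import structures.
From mathcomp Require Import all_boot all_order all_algebra.
From mathcomp Require Import all_classical all_reals all_analysis.

Set Implicit Arguments.
Unset Strict Implicit.
Unset Printing Implicit Defensive.

Import Order.TTheory GRing.Theory Num.Theory numFieldNormedType.Exports.

Local Open Scope classical_set_scope.
Local Open Scope ring_scope.

(* R^d is represented by row vectors 'rV[R]_d.  We equip it with the  *)
(* sigma-algebra generated by the coordinate projections (this is the *)
(* Borel sigma-algebra of R^d), exactly as MathComp-Analysis does for *)
(* n.-tuple T.                                                        *)
Definition rV_measure_display : measure_display -> measure_display.
Proof. exact. Qed.

Section measurable_rV.
Context {R : realType} (d : nat).

Definition rV_coord : 'I_d -> 'rV[R]_d -> R := fun i x => x ord0 i.

Let rV_set0 : g_sigma_preimage rV_coord set0.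
Proof. exact: sigma_algebra0. Qed.

Let rV_setC A : g_sigma_preimage rV_coord A -> g_sigma_preimage rV_coord (~` A).
Proof. exact: sigma_algebraC. Qed.

Let rV_bigcup (F : _^nat) : (forall i, g_sigma_preimage rV_coord (F i)) ->
  g_sigma_preimage rV_coord (\bigcup_i (F i)).
Proof. exact: sigma_algebra_bigcup. Qed.

HB.instance Definition _ := @isMeasurable.Build
  (rV_measure_display default_measure_display)
  'rV[R]_d (g_sigma_preimage rV_coord) rV_set0 rV_setC rV_bigcup.

End measurable_rV.

Definition dotv {R : realType} {d : nat} (x y : 'rV[R]_d) : R :=
  \sum_(k < d) x ord0 k * y ord0 k.

Definition enorm {R : realType} {d : nat} (x : 'rV[R]_d) : R :=
  Num.sqrt (dotv x x).

Definition Akernel {R : realType} {d : nat} (gamma : R) (z : 'rV[R]_d)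
  : 'M[R]_d :=
  (enorm z `^ gamma) *: ((dotv z z) *: 1%:M - z^T *m z).

Definition matvec {R : realType} {d : nat} (M : 'M[R]_d) (w : 'rV[R]_d)
  : 'rV[R]_d :=
  \row_k \sum_(l < d) M k l * w ord0 l.

Definition vel_cont {R : realType} {d : nat} (gamma : R)
  (u : {measure set 'rV[R]_d -> \bar R}) (s : 'rV[R]_d -> 'rV[R]_d)
  (x : 'rV[R]_d) : 'rV[R]_d :=
  \row_k - Rintegral u setT
            (fun y => (matvec (Akernel gamma (x - y)) (s x - s y)) ord0 k).

Definition vel_part {R : realType} {d n : nat} (gamma : R)
  (s : 'rV[R]_d -> 'rV[R]_d) (X : 'I_n -> 'rV[R]_d) (i : 'I_n) : 'rV[R]_d :=
  - ((n%:R)^-1 *: \sum_(j < n) matvec (Akernel gamma (X i - X j)) (s (X i) - s (X j))).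

(* Test functions for the weak formulation: C^1-type functions with
   polynomial growth (|phi| <= C(1+|x|^2), |grad phi| <= C(1+|x|)), a
   class containing 1, x_k and |x|^2.  grad phi(x) . w is 'd phi x w. *)
Definition test_fun {R : realType} {d : nat} (phi : 'rV[R]_d -> R) : Prop :=
  (forall x, differentiable phi x) /\
  exists C : R, forall x,
    `|phi x| <= C * (1 + dotv x x) /\
    forall w, `|'d phi x w| <= C * (1 + enorm x) * enorm w.

(* Weak solution on t >= 0 of  d_t u + div(V_t u) = 0 :
   for every test function phi, t |-> \int phi du_t is continuous on [0,oo)
   and for t > 0,  d/dt \int phi du_t = \int grad phi . V_t du_t. *)
Definition weak_solution {R : realType} {d : nat}
  (u : R -> probability 'rV[R]_d R) (V : R -> 'rV[R]_d -> 'rV[R]_d) : Prop :=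
  forall phi : 'rV[R]_d -> R, test_fun phi ->
    {within [set t : R | 0 <= t],
       continuous (fun t => Rintegral (u t) setT phi)} /\
    forall t : R, 0 < t ->
      derivable (fun t => Rintegral (u t) setT phi) t 1 /\
      derive1 (fun t => Rintegral (u t) setT phi) t =
        Rintegral (u t) setT (fun x => 'd phi x (V t x)).

From HB Require Import structures.
From mathcomp Require Import all_boot all_order all_algebra.
From mathcomp Require Import all_classical all_reals all_analysis.
From mathcomp Require Import ring lra measurable_realfun.

Import Order.TTheory GRing.Theory Num.Theory numFieldNormedType.Exports.

Local Open Scope classical_set_scope.
Local Open Scope ring_scope.

(* The velocity field is an average of the pair flux F(x, y) = A(x - y)(s(x) - s(y)),
   which is antisymmetric because A(-z) = A(z).  Pairing v with any field c and
   symmetrising in (x, y) (a double sum for particles, Fubini for the density) gives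
     \int c . v du = - 1/2 \iint (c(x) - c(y)) . A(x - y)(s(x) - s(y)) du(x) du(y).
   For constant c the right-hand side vanishes (momentum), for c(x) = x it vanishes
   because A(z) z = 0 (energy), and for c = s it is nonpositive because A(z) is
   positive semidefinite (entropy).  These are identities at each fixed time, so they
   also hold along the forward Euler scheme; conservation in continuous time then
   follows from a vanishing derivative, and the entropy rate from the fundamental
   theorem of calculus. *)

Section inner_product.
Context {R : realType} {d : nat}.
Implicit Types (a b w z : 'rV[R]_d).

Lemma dotvC a b : dotv a b = dotv b a.
Proof. by apply: eq_bigr => k _; rewrite mulrC. Qed.

Lemma dotvDl a b w : dotv (a + b) w = dotv a w + dotv b w.
Proof. by rewrite /dotv -big_split; apply: eq_bigr => k _; rewrite !mxE mulrDl. Qed.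

Lemma dotvNl a w : dotv (- a) w = - dotv a w.
Proof. by rewrite /dotv -sumrN; apply: eq_bigr => k _; rewrite !mxE mulNr. Qed.

Lemma dotvZl (c : R) a w : dotv (c *: a) w = c * dotv a w.
Proof. by rewrite /dotv mulr_sumr; apply: eq_bigr => k _; rewrite !mxE mulrA. Qed.

Lemma dotvBl a b w : dotv (a - b) w = dotv a w - dotv b w.
Proof. by rewrite dotvDl dotvNl. Qed.

Lemma dotvNr a w : dotv w (- a) = - dotv w a.
Proof. by rewrite dotvC dotvNl dotvC. Qed.

Lemma dotvBr a b w : dotv w (a - b) = dotv w a - dotv w b.
Proof. by rewrite dotvC dotvBl !(dotvC w). Qed.

Lemma dotvZr (c : R) a w : dotv w (c *: a) = c * dotv w a.
Proof. by rewrite dotvC dotvZl dotvC. Qed.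

Lemma dotv0l w : dotv 0 w = 0.
Proof. by rewrite -(scale0r 0) dotvZl mul0r. Qed.

Lemma dotv_sumr n w (f : 'I_n -> 'rV[R]_d) :
  dotv w (\sum_(j < n) f j) = \sum_(j < n) dotv w (f j).
Proof.
rewrite /dotv; under eq_bigr do rewrite summxE mulr_sumr.
exact: exchange_big.
Qed.

Lemma dotv_ge0 a : 0 <= dotv a a.
Proof. by apply: sumr_ge0 => k _; rewrite -expr2 sqr_ge0. Qed.

Lemma dotv_eq0 a : (dotv a a == 0) = (a == 0).
Proof.
apply/idP/eqP => [|->]; last by rewrite dotv0l.
rewrite psumr_eq0 => [/allP a0|k _]; last by rewrite -expr2 sqr_ge0.
apply/rowP => k; have /a0 : k \in index_enum 'I_d by rewrite mem_index_enum.
by rewrite /= mulf_eq0 orbb mxE => /eqP.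
Qed.

Lemma dotv_CauchySchwarz a z : dotv a z ^+ 2 <= dotv a a * dotv z z.
Proof.
have [/eqP|z0] := eqVneq (dotv z z) 0.
  by rewrite dotv_eq0 => /eqP->; rewrite dotvC !dotv0l expr0n mulr0.
have zz_gt0 : 0 < dotv z z by rewrite lt_neqAle eq_sym z0 dotv_ge0.
(* expand |(z.z) a - (a.z) z|^2 >= 0 *)
have := dotv_ge0 (dotv z z *: a - dotv a z *: z).
rewrite !(dotvBl, dotvBr, dotvZl, dotvZr) (dotvC z a) => sq_ge0.
by rewrite -subr_ge0 -(pmulr_rge0 _ zz_gt0); lra.
Qed.

Lemma enorm_ge0 a : 0 <= enorm a.
Proof. exact: sqrtr_ge0. Qed.

Lemma enormN a : enorm (- a) = enorm a.
Proof. by rewrite /enorm dotvNl dotvNr opprK. Qed.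

Lemma dotv_le_enorm a w : `|dotv a w| <= enorm a * enorm w.
Proof.
rewrite -sqrtr_sqr /enorm -sqrtrM ?dotv_ge0 //.
exact/ler_wsqrtr/dotv_CauchySchwarz.
Qed.

Lemma coord_le_enorm a (k : 'I_d) : `|a ord0 k| <= enorm a.
Proof.
rewrite /enorm -sqrtr_sqr ler_wsqrtr // /dotv (bigD1 k) //= -expr2 lerDl.
by apply: sumr_ge0 => j _; rewrite -expr2 sqr_ge0.
Qed.

Lemma matvecN (M : 'M[R]_d) b : matvec M (- b) = - matvec M b.
Proof. by apply/rowP => k; rewrite !mxE -sumrN; apply: eq_bigr => l _; rewrite mxE mulrN. Qed.

End inner_product.

Section kernel.
Context {R : realType} {d : nat} (gamma : R).
Implicit Types (a b w z : 'rV[R]_d).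

Lemma Akernel_entry z (k l : 'I_d) :
  Akernel gamma z k l = enorm z `^ gamma * (dotv z z * (k == l)%:R - z ord0 k * z ord0 l).
Proof. by rewrite !mxE big_ord1 !mxE. Qed.

Lemma matvec_Akernel z b :
  matvec (Akernel gamma z) b = enorm z `^ gamma *: (dotv z z *: b - dotv z b *: z).
Proof.
apply/rowP => k; rewrite !mxE.
have delta : \sum_(l < d) (k == l)%:R * b ord0 l = b ord0 k.
  rewrite (bigD1 k) //= eqxx mul1r big1 ?addr0 // => l /negbTE.
  by rewrite eq_sym => ->; rewrite mul0r.
under eq_bigr do rewrite Akernel_entry.
transitivity (\sum_(l < d) (enorm z `^ gamma * dotv z z * ((k == l)%:R * b ord0 l)
   - enorm z `^ gamma * z ord0 k * (z ord0 l * b ord0 l))).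
  by apply: eq_bigr => l _; ring.
by rewrite sumrB -!mulr_sumr delta /dotv; ring.
Qed.

Lemma AkernelN z : Akernel gamma (- z) = Akernel gamma z.
Proof.
by apply/matrixP => k l; rewrite !Akernel_entry enormN dotvNl dotvNr !mxE; ring.
Qed.

Lemma dotv_matvec_Akernel a b z : dotv a (matvec (Akernel gamma z) b) =
  enorm z `^ gamma * (dotv z z * dotv a b - dotv a z * dotv z b).
Proof. by rewrite matvec_Akernel !(dotvZr, dotvBr) (dotvC a z); ring. Qed.

Lemma dotv_matvec_Akernel_self z b : dotv z (matvec (Akernel gamma z) b) = 0.
Proof. by rewrite dotv_matvec_Akernel; ring. Qed.

Lemma Akernel_psd z w : 0 <= dotv w (matvec (Akernel gamma z) w).
Proof.
rewrite dotv_matvec_Akernel mulr_ge0 ?powR_ge0 // (dotvC z w) -expr2 subr_ge0.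
by rewrite mulrC dotv_CauchySchwarz.
Qed.

End kernel.

Section pair_sums.
Context {R : numFieldType}.

Lemma pair_sum_antisym0 {V : lmodType R} n (F : 'I_n -> 'I_n -> V) :
  (forall i j, F j i = - F i j) -> \sum_(i < n) \sum_(j < n) F i j = 0.
Proof.
move=> Fanti; set S := \sum_(i < n) _.
have SN : S = - S.
  rewrite {1}/S exchange_big /= -sumrN; apply: eq_bigr => i _.
  by rewrite -sumrN; apply: eq_bigr => j _.
have : 2%:R *: S = 0 by rewrite scaler_nat mulr2n {1}SN addNr.
by move/eqP; rewrite scaler_eq0 pnatr_eq0 => /eqP.
Qed.

Lemma pair_sum_sym n (F : 'I_n -> 'I_n -> R) :
  \sum_(i < n) \sum_(j < n) F i j = (\sum_(i < n) \sum_(j < n) (F i j + F j i)) / 2.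
Proof.
under [in RHS]eq_bigr do rewrite big_split.
by rewrite big_split /= [X in _ + X]exchange_big; field.
Qed.

End pair_sums.

Section particle_velocity.
Context {R : realType} {d n : nat} (gamma : R) (s : 'rV[R]_d -> 'rV[R]_d).
Context (Y : 'I_n -> 'rV[R]_d).

Let F i j := matvec (Akernel gamma (Y i - Y j)) (s (Y i) - s (Y j)).

Let F_antisym i j : F j i = - F i j.
Proof. by rewrite /F -opprB AkernelN -(opprB (s (Y i))) matvecN. Qed.

Lemma sum_vel_part : \sum_(i < n) vel_part gamma s Y i = 0.
Proof. by rewrite /vel_part sumrN -scaler_sumr pair_sum_antisym0 // scaler0 oppr0. Qed.

Let sum_dotv_vel_part_sym (c : 'I_n -> 'rV[R]_d) :
  \sum_(i < n) dotv (c i) (vel_part gamma s Y i) =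
  - ((n%:R)^-1 * (\sum_(i < n) \sum_(j < n) dotv (c i - c j) (F i j)) / 2).
Proof.
under eq_bigr do rewrite dotvNr dotvZr dotv_sumr.
rewrite sumrN -mulr_sumr pair_sum_sym mulrA; congr (- (_ * _ / _)).
by apply: eq_bigr => i _; apply: eq_bigr => j _; rewrite dotvBl -dotvNr -F_antisym.
Qed.

Lemma sum_dotv_vel_part_self : \sum_(i < n) dotv (Y i) (vel_part gamma s Y i) = 0.
Proof.
rewrite sum_dotv_vel_part_sym big1 ?mulr0 ?mul0r ?oppr0 // => i _.
by apply: big1 => j _; apply: dotv_matvec_Akernel_self.
Qed.

Lemma sum_dotv_vel_part_le0 : \sum_(i < n) dotv (s (Y i)) (vel_part gamma s Y i) <= 0.
Proof.
rewrite sum_dotv_vel_part_sym oppr_le0 divr_ge0 // mulr_ge0 ?invr_ge0 //.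
by apply: sumr_ge0 => i _; apply: sumr_ge0 => j _; apply: Akernel_psd.
Qed.

End particle_velocity.

Lemma forward_euler_sum_conserved {R : realType} {d n : nat} {gamma : R}
    {s : 'rV[R]_d -> 'rV[R]_d} {dt : R} {X : nat -> 'I_n -> 'rV[R]_d} :
  (forall k i, X k.+1 i = X k i + dt *: vel_part gamma s (X k) i) ->
  forall k, \sum_(i < n) X k.+1 i = \sum_(i < n) X k i.
Proof.
move=> step k; under eq_bigr do rewrite step.
by rewrite big_split /= -scaler_sumr sum_vel_part scaler0 addr0.
Qed.

Section real_calculus.
Context {R : realType}.
Local Notation Rge0 := [set t : R | 0 <= t].

Lemma continuous_within_sum (A : set R) n (h : 'I_n -> R -> R) :
  (forall i, {within A, continuous (h i)}) ->
  {within A, continuous (fun x => \sum_(i < n) h i x)}.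
Proof.
move=> ch; have -> : (fun x => \sum_(i < n) h i x) = \sum_(i < n) h i.
  by apply/funext => x; rewrite fct_sumE.
apply: (big_ind (fun f : R -> R => {within A, continuous f})) => //.
  by move=> x; exact: cvg_cst.
by move=> f g cf cg x; exact: (@continuousD _ _ (subspace A) f g x (cf x) (cg x)).
Qed.

Lemma continuous_within_coord {d : nat} (A : set R) (X : R -> 'rV[R]_d) (k : 'I_d) :
  {within A, continuous X} -> {within A, continuous (fun x => X x ord0 k)}.
Proof.
move=> cX x; apply: (@continuous_comp _ _ _ _ (fun M : 'rV[R]_d => M ord0 k)).
  exact: cX.
exact: coord_continuous.
Qed.

Lemma continuous_within_ge0_at (f : R -> R) t :
  {within Rge0, continuous f} -> 0 < t -> {for t, continuous f}.
Proof.
move=> cf t0; have : {within `]0, +oo[, continuous f}.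
  by apply: continuous_subspaceW cf => x /=; rewrite in_itv /= andbT => /ltW.
rewrite continuous_open_subspace; last exact: interval_open.
by apply; rewrite inE /= in_itv /= andbT.
Qed.

Lemma derive1_eq0_cst_ge0 (f : R -> R) : {within Rge0, continuous f} ->
  (forall t, 0 < t -> derivable f t 1 /\ derive1 f t = 0) ->
  forall t, 0 <= t -> f t = f 0.
Proof.
move=> cf df t; rewrite le_eqVlt => /orP[/eqP <-//|t0].
have cf0t : {within `[0, t], continuous f}.
  by apply: continuous_subspaceW cf => x /=; rewrite in_itv /= => /andP[].
have df0t x : x \in `]0, t[ -> derivable f x 1 /\ derive1 f x = 0.
  by rewrite in_itv /= => /andP[/df].
have der x (x0t : x \in `]0, t[) := (df0t x x0t).1.
have f'0 x (x0t : x \in `]0, t[) := (df0t x x0t).2.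
have t0t : t \in `[0, t] by rewrite in_itv /= lexx ltW.
have _0t : 0 \in `[0, t] by rewrite in_itv /= lexx ltW.
apply/eqP; rewrite eq_le; apply/andP; split.
- by apply: (ler0_derive1_le_cc der _ cf0t) => // [x /f'0 ->|]; last exact: ltW.
- by apply: (ger0_derive1_le_cc der _ cf0t) => // [x /f'0 ->|]; last exact: ltW.
Qed.

Lemma is_derive1_derive1 {f : R -> R} {t v : R} :
  is_derive t 1 f v -> derivable f t 1 /\ derive1 f t = v.
Proof. by move=> fv; split; [exact: ex_derive | rewrite derive1E derive_val]. Qed.

Lemma is_derive_Rintegral_0t {f : R -> R} {t : R} : {within Rge0, continuous f} -> 0 < t ->
  is_derive t 1 (fun t => Rintegral lebesgue_measure `[0, t] f) (f t).
Proof.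
move=> cf t0; have [] := @continuous_FTC1_closed R f 0 t (t + 1).
- by rewrite ltrDl.
- apply: continuous_compact_integrable; first exact: segment_compact.
  by apply: continuous_subspaceW cf => x /=; rewrite in_itv /= => /andP[].
- exact: t0.
- exact: continuous_within_ge0_at.
by move=> dF F'; apply: DeriveDef; rewrite // -derive1E.
Qed.

Lemma is_derive_sum_pointwise n (h : 'I_n -> R -> R) (t : R) (dh : 'I_n -> R) :
  (forall i, is_derive t 1 (h i) (dh i)) ->
  is_derive t 1 (fun x => \sum_(i < n) h i x) (\sum_(i < n) dh i).
Proof. by move=> H; rewrite -fct_sumE; exact: is_derive_sum. Qed.

Lemma is_derive_coord {d : nat} (X : R -> 'rV[R]_d) (t : R) (k : 'I_d) :
  derivable X t 1 -> is_derive t 1 (fun x => X x ord0 k) (derive1 X t ord0 k).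
Proof.
move=> dX; apply: DeriveDef; first by move/derivable_mxP: dX; apply.
by rewrite derive1E derive_mx // mxE.
Qed.

Lemma is_derive_dotv_self {d : nat} (X : R -> 'rV[R]_d) (t : R) :
  derivable X t 1 ->
  is_derive t 1 (fun x => dotv (X x) (X x)) (2 * dotv (X t) (derive1 X t)).
Proof.
move=> dX; rewrite /dotv mulr_sumr.
apply: is_derive_sum_pointwise => k.
have dXk := is_derive_coord X t k dX.
have dXk2 := is_deriveM dXk dXk.
by rewrite -mulr2n -mulr_natl in dXk2.
Qed.

End real_calculus.

Section particle_flow.
Context {R : realType} {d n : nat} {gamma : R} {s : R -> 'rV[R]_d -> 'rV[R]_d}.
Context {X : 'I_n -> R -> 'rV[R]_d}.
Hypothesis cX : forall i, {within [set t : R | 0 <= t], continuous (X i)}.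
Hypothesis dX : forall i t, 0 < t ->
  derivable (X i) t 1 /\ derive1 (X i) t = vel_part gamma (s t) (fun j => X j t) i.

Lemma particle_sum_conserved t : 0 <= t -> \sum_(i < n) X i t = \sum_(i < n) X i 0.
Proof.
move=> t0; apply/rowP => k; rewrite !summxE; move: t t0.
apply: (@derive1_eq0_cst_ge0 _ (fun t => \sum_(i < n) X i t ord0 k)).
  by apply: continuous_within_sum => i; apply: continuous_within_coord.
move=> t t0; apply: is_derive1_derive1; apply: is_derive_eq.
  by apply: is_derive_sum_pointwise => i; apply: is_derive_coord; case: (dX i t t0).
under eq_bigr do rewrite (dX _ t t0).2.
by rewrite -summxE sum_vel_part mxE.
Qed.

Lemma particle_energy_conserved t : 0 <= t ->
  \sum_(i < n) dotv (X i t) (X i t) = \sum_(i < n) dotv (X i 0) (X i 0).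
Proof.
move: t; apply: (@derive1_eq0_cst_ge0 _ (fun t => \sum_(i < n) dotv (X i t) (X i t))).
  apply: continuous_within_sum => i; apply: continuous_within_sum => k.
  by move=> x; apply: continuousM; apply: continuous_within_coord.
move=> t t0; apply: is_derive1_derive1; apply: is_derive_eq.
  by apply: is_derive_sum_pointwise => i; apply: is_derive_dotv_self; case: (dX i t t0).
under eq_bigr do rewrite (dX _ t t0).2.
by rewrite -mulr_sumr sum_dotv_vel_part_self mulr0.
Qed.

End particle_flow.

Lemma mx_norm_entry_le {R : realType} {m n : nat} (M : 'M[R]_(m, n)) i j :
  `|M i j| <= `|M|.
Proof.
rewrite [X in _ <= X]/Num.Def.normr /= mx_normrE.
exact: (le_bigmax _ (fun ij : 'I_m * 'I_n => `|M ij.1 ij.2|) (i, j)).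
Qed.

Section rV_measurability.
Context {R : realType} {d : nat}.
Local Notation rV := 'rV[R]_d.

Lemma measurable_coord (k : 'I_d) : measurable_fun setT (fun x : rV => x ord0 k).
Proof.
move=> _ Y mY; rewrite setTI; apply: sub_sigma_algebra => /=.
rewrite -bigcup_seq/=; exists k => /=; first by rewrite mem_index_enum.
by exists Y => //; rewrite setTI.
Qed.

Context {dT : measure_display} {T : measurableType dT}.
Implicit Types f g : T -> rV.

Lemma measurable_rV_fun f :
  (forall k, measurable_fun setT (fun x => f x ord0 k)) -> measurable_fun setT f.
Proof.
move=> mf; apply: (@measurability _ _ _ _ setT f (\big[setU/set0]_(i < d)
   preimage_set_system setT (@rV_coord R d i) measurable)) => //.
move=> _ [S + <-]; rewrite -bigcup_seq => -[i _ [B mB <-]].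
by rewrite setTI -comp_preimage setTI; have := mf i measurableT B mB; rewrite setTI.
Qed.

Lemma measurable_fun_coord f k :
  measurable_fun setT f -> measurable_fun setT (fun x => f x ord0 k).
Proof. exact: measurableT_comp (measurable_coord k). Qed.

Lemma measurable_rV_funB f g : measurable_fun setT f -> measurable_fun setT g ->
  measurable_fun setT (fun x => f x - g x).
Proof.
move=> mf mg; apply: measurable_rV_fun => k; under eq_fun do rewrite !mxE.
by apply: measurable_funB; apply: measurable_fun_coord.
Qed.

Lemma measurable_dotv f g : measurable_fun setT f -> measurable_fun setT g ->
  measurable_fun setT (fun x => dotv (f x) (g x)).
Proof.
move=> mf mg; apply: measurable_sum => k.
by apply: measurable_funM; apply: measurable_fun_coord.
Qed.

Lemma measurable_matvec_Akernel (gamma : R) f g :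
  measurable_fun setT f -> measurable_fun setT g ->
  measurable_fun setT (fun x => matvec (Akernel gamma (f x)) (g x)).
Proof.
move=> mf mg; apply: measurable_rV_fun => k.
under eq_fun do rewrite matvec_Akernel !mxE.
have mnorm : measurable_fun setT (fun x => enorm (f x) `^ gamma).
  apply: measurableT_comp (measurable_powR gamma) _.
  apply: measurableT_comp (continuous_measurable_fun (@sqrt_continuous R)) _.
  exact: measurable_dotv.
apply: measurable_funM => //; apply: measurable_funB.
  by apply: measurable_funM; [exact: measurable_dotv | exact: measurable_fun_coord].
by apply: measurable_funM; [exact: measurable_dotv | exact: measurable_fun_coord].
Qed.

End rV_measurability.

Section product_swap.
Context {R : realType} {dT : measure_display} {T : measurableType dT}.
Context {m : {sigma_finite_measure set T -> \bar R}} {f : T * T -> R}.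
Hypothesis mf : measurable_fun setT f.
Hypothesis intf : (m \x m)%E.-integrable setT (fun p => (f p)%:E).

Lemma integrable_prod_swap : (m \x m)%E.-integrable setT (fun p => (f (p.2, p.1))%:E).
Proof.
have mfE : measurable_fun setT (fun p => (f p)%:E) by exact/measurable_EFinP.
have mfsE : measurable_fun setT (fun p : T * T => (f (p.2, p.1))%:E).
  apply/measurable_EFinP.
  exact: measurableT_comp mf (measurable_fun_pair measurable_snd measurable_fst).
apply/(integrable12ltyP m m mfsE).
exact: (integrable21ltyP m m mfE).1 intf.
Qed.

Lemma integral_prod_swap :
  (\int[m \x m]_p (f (p.2, p.1))%:E = \int[m \x m]_p (f p)%:E)%E.
Proof.
by rewrite -(integral12_prod_meas1 integrable_prod_swap) -(integral21_prod_meas1 intf).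
Qed.

End product_swap.

Section flux_symmetrization.
Context {R : realType} {d : nat} {gamma : R}.
Local Notation rV := 'rV[R]_d.
Context {m : {sigma_finite_measure set rV -> \bar R}} {s c : rV -> rV} {C : R}.
Hypothesis ms : measurable_fun setT s.
Hypothesis mc : measurable_fun setT c.
Hypothesis c_bound : forall x, `|c x| <= C * (1 + `|x| + `|s x|).
Hypothesis intK : (m \x m)%E.-integrable setT
  (fun p : rV * rV => (`|Akernel gamma (p.1 - p.2)| * `|s p.1 - s p.2|
                       * (1 + `|p.1| + `|s p.1|))%:E).

Let K (p : rV * rV) :=
  `|Akernel gamma (p.1 - p.2)| * `|s p.1 - s p.2| * (1 + `|p.1| + `|s p.1|).
Let flux (p : rV * rV) := matvec (Akernel gamma (p.1 - p.2)) (s p.1 - s p.2).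
Let G (p : rV * rV) := dotv (c p.1) (flux p).

Let mflux : measurable_fun setT flux.
Proof.
apply: measurable_matvec_Akernel; apply: measurable_rV_funB => //.
- exact: measurableT_comp ms measurable_fst.
- exact: measurableT_comp ms measurable_snd.
Qed.

Let mG : measurable_fun setT G.
Proof. by apply: measurable_dotv => //; exact: measurableT_comp mc measurable_fst. Qed.

Let flux_bound p k :
  `|flux p ord0 k| <= d%:R * (`|Akernel gamma (p.1 - p.2)| * `|s p.1 - s p.2|).
Proof.
rewrite mxE mulr_natl -[d in _ *+ d]card_ord -sumr_const.
apply: le_trans (ler_norm_sum _ _ _) _; apply: ler_sum => l _.
by rewrite normrM; apply: ler_pM => //; apply: mx_norm_entry_le.
Qed.

Let G_bound p : `|G p| <= C * d%:R * d%:R * K p.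
Proof.
apply: le_trans (ler_norm_sum _ _ _) _.
apply: le_trans (_ : _ <= \sum_(k < d) C * (1 + `|p.1| + `|s p.1|) *
    (d%:R * (`|Akernel gamma (p.1 - p.2)| * `|s p.1 - s p.2|))) _.
  apply: ler_sum => k _; rewrite normrM; apply: ler_pM => //.
  exact: le_trans (mx_norm_entry_le _ _ _) (c_bound _).
by rewrite sumr_const card_ord -mulr_natl /K; lra.
Qed.

Let int_flux k : (m \x m)%E.-integrable setT (fun p => (flux p ord0 k)%:E).
Proof.
apply: (le_integrable measurableT _ _ (integrableZl measurableT d%:R intK)).
  by apply/measurable_EFinP; exact: measurable_fun_coord mflux.
move=> p _ /=; rewrite lee_fin; apply: le_trans (flux_bound p k) _.
apply: le_trans (ler_norm _); rewrite ler_wpM2l //.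
by rewrite ler_peMr ?mulr_ge0 // -addrA lerDl addr_ge0.
Qed.

Let intG : (m \x m)%E.-integrable setT (fun p => (G p)%:E).
Proof.
apply: (le_integrable measurableT _ _ (integrableZl measurableT (C * d%:R * d%:R) intK)).
  exact/measurable_EFinP.
by move=> p _; rewrite /= lee_fin; exact: le_trans (G_bound p) (ler_norm _).
Qed.

Let integral_pair_flux :
  (\int[m \x m]_p (dotv (c p.1 - c p.2) (flux p))%:E = 2%:E * \int[m \x m]_p (G p)%:E)%E.
Proof.
have GE p : dotv (c p.1 - c p.2) (flux p) = G p + G (p.2, p.1).
  by rewrite /G /flux /= -[p.2 - p.1]opprB AkernelN -[s p.2 - s p.1]opprB matvecN dotvNr dotvBl.
under eq_integral do rewrite GE EFinD.
rewrite (integralD measurableT intG (integrable_prod_swap mG intG)) integral_prod_swap //.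
have /fineK <- := integrable_fin_num measurableT intG.
by rewrite -EFinD -EFinM; congr EFin; ring.
Qed.

Let dotv_vel_cont_ae : \forall x \ae m,
  (dotv (c x) (vel_cont gamma m s x))%:E = (- fubini_F m (fun p => (G p)%:E) x)%E.
Proof.
have : \forall x \ae m, forall k, m.-integrable setT (fun y => (flux (x, y) ord0 k)%:E).
  by apply: filter_forall => k; exact: ae_integrable1 (int_flux k).
apply: filterS => x intx; rewrite /dotv -sumEFin /fubini_F /G /dotv.
transitivity (\sum_(k < d) - ((c x ord0 k)%:E * \int[m]_y (flux (x, y) ord0 k)%:E))%E.
  apply: eq_bigr => k _; rewrite mxE mulrN EFinN EFinM fineK //.
  exact: integrable_fin_num (intx k).
rewrite sumeN; last first.
  move=> i j _ _; apply: fin_num_adde_defl.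
  by rewrite fin_numM // (integrable_fin_num measurableT (intx j)).
congr (- _)%E; under [in RHS]eq_integral do rewrite -sumEFin.
rewrite integral_sum //; last first.
  by move=> k; under eq_fun do rewrite /= EFinM; exact: integrableZl.
by apply: eq_bigr => k _; under [RHS]eq_integral do rewrite /= EFinM; rewrite integralZl.
Qed.

Let mvel_cont : measurable_fun setT (vel_cont gamma m s).
Proof.
apply: measurable_rV_fun => k; under eq_fun do rewrite mxE.
apply/measurable_funN/measurableT_comp => //.
exact: measurable_fubini_F (int_flux k).
Qed.

Lemma Rintegral_dotv_vel_cont :
  Rintegral m setT (fun x => dotv (c x) (vel_cont gamma m s x)) =
  - Rintegral (m \x m)%E setT (fun p : rV * rV =>
      dotv (c p.1 - c p.2) (matvec (Akernel gamma (p.1 - p.2)) (s p.1 - s p.2))) / 2.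
Proof.
rewrite /Rintegral; have -> : (\int[m]_x (dotv (c x) (vel_cont gamma m s x))%:E)%E =
    (\int[m]_x - fubini_F m (fun p => (G p)%:E) x)%E.
  apply: ae_eq_integral => //.
  - by apply/measurable_EFinP; exact: measurable_dotv mc mvel_cont.
  - exact: measurableT_comp (measurable_fubini_F intG).
  - by apply: filterS dotv_vel_cont_ae => x + _.
rewrite integralN; last exact: (integrable_add_def measurableT (integrable_fubini_F intG)).
have Gfin := integrable_fin_num measurableT intG.
by rewrite (integral12_prod_meas1 intG) integral_pair_flux fineN fineM //=; field.
Qed.

End flux_symmetrization.

Section test_functions.
Context {R : realType} {d : nat}.
Local Notation rV := 'rV[R]_d.

Lemma is_diff_coord (k : 'I_d) (x : rV) :
  is_diff x (fun y : rV => y ord0 k) (fun w : rV => w ord0 k).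
Proof.
have lin : linear (fun y : rV => y ord0 k) by move=> a y z; rewrite !mxE.
pose L : {linear rV -> R} :=
  HB.pack (fun y : rV => y ord0 k) (GRing.isLinear.Build _ _ _ _ _ lin).
have cL : continuous L by move=> y; exact: coord_continuous.
change (is_diff x L L).
by apply: DiffDef; [exact: linear_differentiable | exact: diff_lin].
Qed.

Lemma is_diff_dotv_self (x : rV) :
  is_diff x (fun y : rV => dotv y y) (fun w => 2 * dotv x w).
Proof.
have -> : (fun y : rV => dotv y y) =
    \sum_(k < d) ((fun y : rV => y ord0 k) * (fun y : rV => y ord0 k)).
  by apply/funext => y; rewrite fct_sumE.
have -> : (fun w : rV => 2 * dotv x w) =
    \sum_(k < d) (x ord0 k *: (fun w : rV => w ord0 k) + x ord0 k *: (fun w : rV => w ord0 k)).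
  apply/funext => w; rewrite fct_sumE /dotv mulr_sumr; apply: eq_bigr => k _ /=.
  by rewrite !fctE -mulr2n mulr_natl.
elim/big_ind2 : _ => [|f f' g g' ff' gg'|k _]; first exact: is_diff_cst.
  exact: is_diffD.
exact: is_diffM (is_diff_coord k x) (is_diff_coord k x).
Qed.

Lemma diff_coord (k : 'I_d) (x w : rV) : 'd (fun y : rV => y ord0 k) x w = w ord0 k.
Proof. by case: (is_diff_coord k x) => _ ->. Qed.

Lemma diff_dotv_self (x w : rV) : 'd (fun y : rV => dotv y y) x w = 2 * dotv x w.
Proof. by case: (is_diff_dotv_self x) => _ ->. Qed.

Lemma test_fun_coord (k : 'I_d) : test_fun (fun x : rV => x ord0 k).
Proof.
split=> [x|]; first by case: (is_diff_coord k x).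
exists 1 => x; split=> [|w].
  rewrite mul1r; apply: le_trans (coord_le_enorm x k) _.
  rewrite -[dotv x x]sqr_sqrtr ?dotv_ge0 //; have := enorm_ge0 x; rewrite /enorm; nra.
rewrite diff_coord mul1r; apply: le_trans (coord_le_enorm w k) _.
by have := enorm_ge0 x; have := enorm_ge0 w; nra.
Qed.

Lemma test_fun_dotv_self : test_fun (fun x : rV => dotv x x).
Proof.
split=> [x|]; first by case: (is_diff_dotv_self x).
exists 2 => x; split=> [|w].
  by rewrite ger0_norm ?dotv_ge0 //; have := dotv_ge0 x; lra.
rewrite diff_dotv_self normrM ger0_norm // -mulrA ler_pM2l //.
apply: le_trans (dotv_le_enorm x w) _.
by have := enorm_ge0 x; have := enorm_ge0 w; nra.
Qed.

Lemma dotv_delta_mx (k : 'I_d) (w : rV) : dotv (delta_mx ord0 k) w = w ord0 k.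
Proof.
rewrite /dotv (bigD1 k) //= mxE !eqxx mul1r big1 ?addr0 // => j /negbTE jk.
by rewrite mxE jk andbF mul0r.
Qed.

Lemma mx_norm_delta_mx (k : 'I_d) : `|delta_mx ord0 k : rV| <= 1.
Proof.
rewrite [X in X <= _]/Num.Def.normr /= mx_normrE; apply: bigmax_le => //= ij _.
by rewrite mxE; case: andP; rewrite ?normr1 ?normr0.
Qed.

End test_functions.

Lemma weak_solution_conserved {R : realType} {d : nat}
    (u : R -> probability 'rV[R]_d R) (V : R -> 'rV[R]_d -> 'rV[R]_d)
    (phi : 'rV[R]_d -> R) :
  weak_solution u V -> test_fun phi ->
  (forall t, 0 < t -> Rintegral (u t) setT (fun x => 'd phi x (V t x)) = 0) ->
  forall t, 0 <= t -> Rintegral (u t) setT phi = Rintegral (u 0) setT phi.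
Proof.
move=> ws tphi flux0; have [cphi dphi] := ws _ tphi.
apply: derive1_eq0_cst_ge0 cphi _ => t t0.
by have [dt ->] := dphi t t0; split=> //; exact: flux0.
Qed.

Section density_solution.
Context {R : realType} {d : nat} {gamma : R}.
Local Notation rV := 'rV[R]_d.
Context {s : R -> rV -> rV} {u : R -> probability rV R}.
Let V t := vel_cont gamma (u t) (s t).
Hypothesis ws : weak_solution u V.
Hypothesis ms : forall t, 0 <= t -> measurable_fun setT (s t).
Hypothesis intK : forall t, 0 <= t -> ((u t) \x (u t))%E.-integrable setT
  (fun p : rV * rV => (`|Akernel gamma (p.1 - p.2)| * `|s t p.1 - s t p.2|
                       * (1 + `|p.1| + `|s t p.1|))%:E).

Let flux_sym t (c : rV -> rV) (C : R) : 0 <= t -> measurable_fun setT c ->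
  (forall x, `|c x| <= C * (1 + `|x| + `|s t x|)) ->
  Rintegral (u t) setT (fun x => dotv (c x) (V t x)) =
  - Rintegral ((u t) \x (u t))%E setT (fun p : rV * rV =>
      dotv (c p.1 - c p.2) (matvec (Akernel gamma (p.1 - p.2)) (s t p.1 - s t p.2))) / 2.
Proof. by move=> t0 mc c_bound; exact: Rintegral_dotv_vel_cont (ms t t0) mc c_bound (intK t t0). Qed.

Lemma density_momentum_conserved (k : 'I_d) t : 0 <= t ->
  Rintegral (u t) setT (fun x => x ord0 k) = Rintegral (u 0) setT (fun x => x ord0 k).
Proof.
move: t; apply: weak_solution_conserved ws (test_fun_coord k) _ => t /ltW t0.
under eq_Rintegral do rewrite diff_coord -dotv_delta_mx.
rewrite (flux_sym _ _ 1 t0) ?measurable_cst //.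
  by under eq_Rintegral do rewrite subrr dotv0l; rewrite /Rintegral integral0_eq // oppr0 mul0r.
move=> x; rewrite mul1r; apply: le_trans (mx_norm_delta_mx k) _.
by rewrite -addrA lerDl addr_ge0.
Qed.

Lemma density_energy_conserved t : 0 <= t ->
  Rintegral (u t) setT (fun x => dotv x x) = Rintegral (u 0) setT (fun x => dotv x x).
Proof.
move: t; apply: weak_solution_conserved ws test_fun_dotv_self _ => t /ltW t0.
under eq_Rintegral do rewrite diff_dotv_self -dotvZl.
rewrite (flux_sym _ _ 2 t0).
- under eq_Rintegral do rewrite -scalerBr dotvZl dotv_matvec_Akernel_self mulr0.
  by rewrite /Rintegral integral0_eq // oppr0 mul0r.
- apply: measurable_rV_fun => k; under eq_fun do rewrite mxE.
  exact: measurable_funM (measurable_coord k).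
- move=> x; rewrite normrZ ger0_norm // ler_pM2l //.
  by have := normr_ge0 (s t x); lra.
Qed.

Lemma density_entropy_rate_le0 t : 0 <= t ->
  Rintegral (u t) setT (fun x => dotv (s t x) (V t x)) <= 0.
Proof.
move=> t0; rewrite (flux_sym _ _ 1 t0).
- rewrite mulNr oppr_le0 divr_ge0 // Rintegral_ge0 // => p _.
  exact: Akernel_psd.
- exact: ms.
- by move=> x; rewrite mul1r lerDr addr_ge0.
Qed.

End density_solution.

Theorem proposition3p1 (R : realType) (d : nat) (gamma : R)
  (hgamma : - (d%:R) - 1 <= gamma <= 1) :
  (* 1. density (measure) solution of the continuity equation *)
  (forall (s : R -> 'rV[R]_d -> 'rV[R]_d) (u : R -> probability 'rV[R]_d R),
     let V := fun t => vel_cont gamma (u t) (s t) in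
     (* u solves d_t u + div(V u) = 0 weakly, V_t = v_t computed from u_t *)
     weak_solution u V ->
     (* regularity ("s sufficiently regular") *)
     (forall t, 0 <= t -> measurable_fun setT (s t)) ->
     (forall t, 0 <= t ->
        (u t).-integrable setT (fun x => (dotv x x)%:E)) ->
     (forall t, 0 <= t ->
        ((u t) \x (u t))%E.-integrable setT
          (fun p : 'rV[R]_d * 'rV[R]_d =>
             (`|Akernel gamma (p.1 - p.2)| * `|s t p.1 - s t p.2|
              * (1 + `|p.1| + `|s t p.1|))%:E)) ->
     {within [set t : R | 0 <= t],
        continuous (fun t => Rintegral (u t) setT
                               (fun x => dotv (s t x) (V t x)))} ->
     (forall t, 0 <= t ->
        (* mass *)
        u t setT = u 0 setT /\
        (* momentum *)
        (forall k : 'I_d, Rintegral (u t) setT (fun x => x ord0 k)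
                          = Rintegral (u 0) setT (fun x => x ord0 k)) /\
        (* energy *)
        Rintegral (u t) setT (fun x => dotv x x)
          = Rintegral (u 0) setT (fun x => dotv x x)) /\
     (* estimated entropy E_t = \int_0^t \int s_tau . v_tau du_tau dtau *)
     (let E := fun t => Rintegral lebesgue_measure `[0, t]
                 (fun tau => Rintegral (u tau) setT
                               (fun x => dotv (s tau x) (V tau x))) in
      forall t, 0 < t -> derivable E t 1 /\ derive1 E t <= 0)) /\
  (* 2. particle solution *)
  (forall (n : nat) (s : R -> 'rV[R]_d -> 'rV[R]_d)
          (X : 'I_n -> R -> 'rV[R]_d),
     (forall i, {within [set t : R | 0 <= t], continuous (X i)}) ->
     (forall i t, 0 < t ->
        derivable (X i) t 1 /\
        derive1 (X i) t = vel_part gamma (s t) (fun j => X j t) i) ->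
     {within [set t : R | 0 <= t],
        continuous (fun tau => \sum_(i < n)
           dotv (s tau (X i tau)) (vel_part gamma (s tau) (fun j => X j tau) i))} ->
     (forall t, 0 <= t ->
        (n%:R)^-1 *: \sum_(i < n) X i t = (n%:R)^-1 *: \sum_(i < n) X i 0 /\
        (n%:R)^-1 * \sum_(i < n) dotv (X i t) (X i t)
          = (n%:R)^-1 * \sum_(i < n) dotv (X i 0) (X i 0)) /\
     (let E := fun t => (n%:R)^-1 * Rintegral lebesgue_measure `[0, t]
                 (fun tau => \sum_(i < n)
                    dotv (s tau (X i tau))
                         (vel_part gamma (s tau) (fun j => X j tau) i)) in
      forall t, 0 < t -> derivable E t 1 /\ derive1 E t <= 0)) /\
  (* 3. forward-Euler time-discretized particle solution *)
  (forall (n : nat) (s : 'rV[R]_d -> 'rV[R]_d) (dt : R)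
          (X : nat -> 'I_n -> 'rV[R]_d),
     0 < dt ->
     (forall k i, X k.+1 i = X k i + dt *: vel_part gamma s (X k) i) ->
     (forall k, (n%:R)^-1 *: \sum_(i < n) X k.+1 i
                = (n%:R)^-1 *: \sum_(i < n) X k i) /\
     (let E := fun k : nat => dt / n%:R *
                 \sum_(1 <= j < k.+1) \sum_(i < n)
                    dotv (s (X j i)) (vel_part gamma s (X j) i) in
      forall k, E k.+1 <= E k)).
Proof.
split; [|split].
- move=> s u V ws ms _ intK cE; split.
    move=> t t0; split; first by rewrite !probability_setT.
    split; first by move=> k; exact: (density_momentum_conserved ws ms intK k t t0).
    exact: (density_energy_conserved ws ms intK t t0).
  move=> E t t0; have [dE ->] := is_derive1_derive1 (is_derive_Rintegral_0t cE t0).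
  by split=> //; exact: (density_entropy_rate_le0 ms intK t (ltW t0)).
- move=> n s X cX dX cE; split.
    move=> t t0; rewrite (particle_sum_conserved cX dX t t0).
    by rewrite (particle_energy_conserved cX dX t t0).
  move=> E t t0.
  have [dE ->] := is_derive1_derive1 (is_deriveZ (n%:R)^-1 (is_derive_Rintegral_0t cE t0)).
  by split=> //; rewrite mulr_ge0_le0 ?invr_ge0 ?sum_dotv_vel_part_le0.
- move=> n s dt X dt0 step; split=> [k|E k].
    by rewrite (forward_euler_sum_conserved step).
  rewrite /E big_nat_recr //= mulrDr gerDl.
  by rewrite mulr_ge0_le0 ?sum_dotv_vel_part_le0 // divr_ge0 // ltW.
Qed.
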